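(* Assume the Framework (the Purification Postulate is not needed). Let $\rho_1,\rho_2,\rho_3\in\mathfrak S_1(\mathrm A)$ with $\rho_1\ne\rho_3$ and $\rho_2=p\rho_1+(1-p)\rho_3$ for some $0<p<1$, and let $\Psi_i\in\mathfrak S_1(\mathrm A\mathrm B)$ be a purification of $\rho_i$ for $i=1,2,3$ (i.e. $\Psi_i$ pure with $(\mathcal I_{\mathrm A}\otimes e_{\mathrm B})\Psi_i=\rho_i$). Then for no finite $N\ge1$ is there a transformation $\mathcal C\in\mathfrak T(\mathrm A^{\otimes N},\mathrm A\mathrm B)$ such that $\mathcal C(\rho_i^{\otimes N})=\Psi_i$ for all $i=1,2,3$.
   Context: Framework. We work in an operational-probabilistic theory: there is a collection of systems $\mathrm A,\mathrm B,\dots$, closed under a composition $\mathrm A\mathrm B$ (associative, symmetric up to a reversible swap, with a trivial system $\mathrm I$ satisfying $\mathrm A\mathrm I=\mathrm A$); for each pair of systems a set $\mathfrak T(\mathrm A,\mathrm B)$ of transformations; a test from $\mathrm A$ to $\mathrm B$ is a finite collection $\{\mathcal C_i\}_{i\in X}\subseteq\mathfrak T(\mathrm A,\mathrm B)$, and every transformation belongs to some test. Tests are closed under sequential composition, parallel composition ($\otimes$), coarse-graining (summing outcomes over the blocks of a partition of $X$) and conditioning (choosing the next test depending on the outcome of the previous one). States of $\mathrm A$ are the elements of $\mathfrak S(\mathrm A):=\mathfrak T(\mathrm I,\mathrm A)$, effects are the elements of $\mathfrak T(\mathrm A,\mathrm I)$, and transformations $\mathrm I\to\mathrm I$ are probabilities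 in $[0,1]$ (those of a test sum to $1$; composition is multiplication). An effect $a$ and a state $\rho$ give the probability $(a|\rho)$. States (effects) are identified when they give equal probabilities on all effects (states); transformations $\mathcal C,\mathcal C'$ are identified when $\mathcal C\otimes\mathcal I_{\mathrm S}$ and $\mathcal C'\otimes\mathcal I_{\mathrm S}$ act identically on all states of $\mathrm A\mathrm S$ for every system $\mathrm S$. States span a finite-dimensional real vector space $\mathfrak S_{\mathbb R}(\mathrm A)$, transformations act linearly, and $\mathfrak T_{\mathbb R}(\mathrm A,\mathrm B)$ is the real span of $\mathfrak T(\mathrm A,\mathrm B)$. Standing assumptions: (i) causality: each system $\mathrm A$ has a unique deterministic effect $e_{\mathrm A}$ (the effect forming a one-outcome observation test), and $e_{\mathrm A\mathrm B}=e_{\mathrm A}\otimes e_{\mathrm B}$; (ii) local discriminability: if two states of $\mathrm A\mathrm B$ differ, some product effect $a\otimes b$ gives them different probabilities; (iii) all sets of states are closed, the theory is not deterministic (hence all sets of states, effects and transformations are convex), and perfectly distinguishable states exist. A state $\rho$ is normalized if $(e|\rho)=1$; $\mathfrak S_1(\mathrm A)$ is the set of normalized states. A channel is a $\mathcal C\in\mathfrak T(\mathrm A,\mathrm B)$ with $e_{\mathrm B}\circ\mathcal C=e_{\mathrm A}$. A channel $\mathcal U\in\mathfrak T(\mathrm A,\mathrm B)$ is reversible if some channel $\mathcal W\in\mathfrak T(\mathrm B,\mathrm A)$ satisfies $\mathcal W\mathcal U=\mathcal I_{\mathrm A}$, $\mathcal U\mathcal W=\mathcal I_{\mathrm B}$;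 $\mathbf G_{\mathrm A}$ is the group of reversible channels on $\mathrm A$. The marginal of a state $\sigma$ of $\mathrm A\mathrm B$ on $\mathrm A$ is $(\mathcal I_{\mathrm A}\otimes e_{\mathrm B})\sigma$. Refinement. For $\mathcal C\in\mathfrak T(\mathrm A,\mathrm B)$, write $\mathcal D\prec\mathcal C$ if there are a test $\{\mathcal D_j\}_{j\in Y}$ and $Y_0\subseteq Y$ with $\mathcal C=\sum_{j\in Y_0}\mathcal D_j$ and $\mathcal D\in\{\mathcal D_j\}_{j\in Y_0}$; the refinement set is $D_{\mathcal C}=\{\mathcal D:\mathcal D\prec\mathcal C\}$. $\mathcal C$ is atomic if $\mathcal D\prec\mathcal C$ implies $\mathcal D=\lambda\mathcal C$ for some $\lambda\in[0,1]$. A pure state is an atomic state; a state is mixed otherwise. *)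

(* An abstract operational-probabilistic theory (OPT),
   presented through its linear (matrix) representation over a real field R.
   Conventions: a transformation A -> B is a matrix 'M_(dim A, dim B) acting on
   row vectors by right multiplication; "D after C" is C *m D; states of A are
   matrices 'M_(dim I, dim A), effects 'M_(dim A, dim I), with dim I = 1, so that
   probabilities are 1x1 matrices read off by the trace. *)
From HB Require Import structures.
From mathcomp Require Import all_boot all_order all_algebra.
Unset Printing Implicit Defensive.
Import Order.TTheory GRing.Theory Num.Theory.
Local Open Scope ring_scope.

Record OPT (R : realFieldType) := Opt {
  sys : Type;
  sI : sys;
  scomp : sys -> sys -> sys;
  dim : sys -> nat;                           (* dim of the real span of states *)
  transf : forall A B : sys, pred 'M[R]_(dim A, dim B);
  is_test : forall A B : sys, seq 'M[R]_(dim A, dim B) -> Prop;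
  par : forall A B C D : sys, 'M[R]_(dim A, dim B) -> 'M[R]_(dim C, dim D) ->
          'M[R]_(dim (scomp A C), dim (scomp B D));
  sswap : forall A B : sys, 'M[R]_(dim (scomp A B), dim (scomp B A));
  compA : forall A B C, scomp (scomp A B) C = scomp A (scomp B C);
  compI : forall A, scomp A sI = A;
}.

Arguments sys {R} _.
Arguments sI {R} _.
Arguments scomp {R} _.
Arguments dim {R} _.
Arguments transf {R} _ A B.
Arguments is_test {R _ A B}.
Arguments par {R _ A B C D}.
Arguments sswap {R} _ A B.
Arguments compA {R} _ A B C.
Arguments compI {R} _ A.

Definition Mx {R : realFieldType} (T : OPT R) (A B : sys T) := 'M[R]_(dim T A, dim T B).

Definition dimAI {R : realFieldType} (T : OPT R) (A : sys T) :
  dim T (scomp T A (sI T)) = dim T A := congr1 (dim T) (compI T A).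

(* D ≺ C : D is an outcome, in a subset Y0 of outcomes, of a test whose
   coarse-graining over Y0 is C. *)
Definition refines {R : realFieldType} {T : OPT R} {A B : sys T} (D C : Mx T A B) :=
  exists ds : seq (Mx T A B), is_test ds /\
    exists m : bitseq, C = \sum_(d <- mask m ds) d /\ D \in mask m ds.

Definition atomic {R : realFieldType} {T : OPT R} {A B : sys T} (C : Mx T A B) :=
  C \in transf T A B /\
  forall D : Mx T A B, refines D C -> exists l : R, 0 <= l <= 1 /\ D = l *: C.

Definition is_state {R : realFieldType} {T : OPT R} {A : sys T} (rho : Mx T (sI T) A) :=
  rho \in transf T (sI T) A.

Definition pure_state {R : realFieldType} {T : OPT R} {A : sys T} (rho : Mx T (sI T) A) :=
  atomic rho.

Definition deterministic {R : realFieldType} {T : OPT R} {A : sys T} (e : Mx T A (sI T)) :=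
  is_test [:: e].

Definition normalized {R : realFieldType} {T : OPT R} {A : sys T} (rho : Mx T (sI T) A) :=
  is_state rho /\ forall e : Mx T A (sI T), deterministic e -> \tr (rho *m e) = 1.

(* (I_A ⊗ e_B) Psi = rho   (as states of A I = A) *)
Definition marginal_is {R : realFieldType} {T : OPT R} {A B : sys T}
  (Psi : Mx T (sI T) (scomp T A B)) (rho : Mx T (sI T) A) :=
  forall e : Mx T B (sI T), deterministic e ->
    castmx (erefl, dimAI T A) (Psi *m par (1%:M : Mx T A A) e) = rho.

Definition purification {R : realFieldType} {T : OPT R} {A B : sys T}
  (rho : Mx T (sI T) A) (Psi : Mx T (sI T) (scomp T A B)) :=
  normalized Psi /\ pure_state Psi /\ marginal_is Psi rho.

(* tensor product of states, as a state of AB (using I I = I) *)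
Definition tens_state {R : realFieldType} {T : OPT R} {A B : sys T}
  (rho : Mx T (sI T) A) (sigma : Mx T (sI T) B) : Mx T (sI T) (scomp T A B) :=
  castmx (dimAI T (sI T), erefl) (par rho sigma).

(* A^{⊗n}: I, A, AA, A(AA), ... *)
Fixpoint tpow {R : realFieldType} (T : OPT R) (A : sys T) (n : nat) : sys T :=
  match n with
  | 0 => sI T
  | S n' => match n' with 0 => A | _ => scomp T A (tpow T A n') end
  end.

Fixpoint spowS {R : realFieldType} {T : OPT R} {A : sys T} (rho : Mx T (sI T) A) (n : nat)
  : Mx T (sI T) (tpow T A n.+1) :=
  match n return Mx T (sI T) (tpow T A n.+1) with
  | 0 => rho
  | S n' => tens_state rho (spowS rho n')
  end.

Definition spow {R : realFieldType} {T : OPT R} {A : sys T} (rho : Mx T (sI T) A) (n : nat)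
  : Mx T (sI T) (tpow T A n) :=
  match n return Mx T (sI T) (tpow T A n) with
  | 0 => 1%:M
  | S n' => spowS rho n'
  end.

Definition OPT_axioms {R : realFieldType} (T : OPT R) : Prop :=
  (dim T (sI T) = 1%N) /\
      (forall A B (c : Mx T A B), c \in transf T A B <-> exists cs, is_test cs /\ c \in cs) /\
      (forall A, is_test [:: (1%:M : Mx T A A)]) /\
      (forall A B C (cs : seq (Mx T A B)) (ds : seq (Mx T B C)),
          is_test cs -> is_test ds -> is_test [seq c *m d | c <- cs, d <- ds]) /\
      (forall A B C D (cs : seq (Mx T A B)) (ds : seq (Mx T C D)),
          is_test cs -> is_test ds -> is_test [seq par c d | c <- cs, d <- ds]) /\
      (* coarse-graining over the blocks of a partition *)
      (forall A B (cs : seq (Mx T A B)) (k : nat) (l : 'I_(size cs) -> 'I_k),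
          is_test cs -> (forall j, exists i, l i = j) ->
          is_test [seq \sum_(i < size cs | l i == j) cs`_i | j <- enum 'I_k]) /\
      (forall A B C (cs : seq (Mx T A B)) (ds : nat -> seq (Mx T B C)),
          is_test cs -> (forall i, (i < size cs)%N -> is_test (ds i)) ->
          is_test (flatten [seq [seq cs`_i *m d | d <- ds i] | i <- iota 0 (size cs)])) /\
      (forall c : Mx T (sI T) (sI T), c \in transf T (sI T) (sI T) -> 0 <= \tr c <= 1) /\
      (forall cs : seq (Mx T (sI T) (sI T)), is_test cs -> \sum_(c <- cs) \tr c = 1)
  /\
      (forall A B C A' B' C' (f : Mx T A B) (g : Mx T B C) (f' : Mx T A' B') (g' : Mx T B' C'),
          par (f *m g) (f' *m g') = par f f' *m par g g') /\
      (forall A C, par (1%:M : Mx T A A) (1%:M : Mx T C C) = 1%:M) /\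
      (forall A B C D (a : R) (x y : Mx T A B) (z : Mx T C D),
          par (a *: x + y) z = a *: par x z + par y z) /\
      (forall A B C D (a : R) (z : Mx T A B) (x y : Mx T C D),
          par z (a *: x + y) = a *: par z x + par z y) /\
      (forall A B (f : Mx T A B),
          par f (1%:M : Mx T (sI T) (sI T)) = castmx (esym (dimAI T A), esym (dimAI T B)) f) /\
      (forall A B C D E F (f : Mx T A B) (g : Mx T C D) (h : Mx T E F),
          castmx (congr1 (dim T) (compA T A C E), congr1 (dim T) (compA T B D F))
                 (par (par f g) h) = par f (par g h)) /\
      (forall A B, is_test [:: sswap T A B] /\ sswap T A B *m sswap T B A = 1%:M) /\
      (forall A B C D (f : Mx T A B) (g : Mx T C D),
          par f g *m sswap T B D = sswap T A C *m par g f) /\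
      (forall A (x : Mx T (sI T) A), exists s : seq (R * Mx T (sI T) A),
          (forall q, q \in s -> q.2 \in transf T (sI T) A) /\ x = \sum_(q <- s) q.1 *: q.2) /\
      (forall A (x y : Mx T (sI T) A),
          (forall a, a \in transf T A (sI T) -> \tr (x *m a) = \tr (y *m a)) -> x = y).

Definition Framework {R : realFieldType} (T : OPT R) : Prop :=
  OPT_axioms T /\
      (forall A, exists! e : Mx T A (sI T), deterministic e) /\
      (forall A B (eA : Mx T A (sI T)) (eB : Mx T B (sI T)),
          deterministic eA -> deterministic eB ->
          deterministic (castmx (erefl, dimAI T (sI T)) (par eA eB))) /\
      (forall A B (Psi Phi : Mx T (sI T) (scomp T A B)),
          is_state Psi -> is_state Phi -> Psi <> Phi ->
          exists (a : Mx T A (sI T)) (b : Mx T B (sI T)),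
            [/\ a \in transf T A (sI T), b \in transf T B (sI T) &
              \tr (Psi *m castmx (erefl, dimAI T (sI T)) (par a b))
              <> \tr (Phi *m castmx (erefl, dimAI T (sI T)) (par a b))]) /\
      (forall A (x : Mx T (sI T) A),
          (forall eps : R, 0 < eps -> exists y, is_state y /\ forall i j, `|x i j - y i j| < eps) ->
          is_state x) /\
      (* (iii) not deterministic, hence convex: every binary coin exists *)
      ((exists c : Mx T (sI T) (sI T), c \in transf T (sI T) (sI T) /\ 0 < \tr c < 1) /\
       (forall q : R, 0 <= q <= 1 ->
          is_test [:: (q%:M : Mx T (sI T) (sI T)); (1 - q)%:M])) /\
      (exists A (rho sigma : Mx T (sI T) A) (a b : Mx T A (sI T)),
          [/\ normalized rho, normalized sigma, is_test [:: a; b],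
              \tr (rho *m a) = 1 & \tr (sigma *m b) = 1]).

(* Conditioning a coin test with
   outcome probabilities (p, 1-p) on tests containing rho1 and rho3 shows that
   p rho1 is a refinement of rho2 (in the sense of [refines]).  Refinement is
   stable under parallel composition and under post-composition with any
   transformation, so p^N rho1^{⊗N} refines rho2^{⊗N}, and p^N C(rho1^{⊗N})
   refines C(rho2^{⊗N}).  If C maps rho_i^{⊗N} to Psi_i, then p^N Psi1 refines
   the pure state Psi2, hence is proportional to it; both being normalized,
   Psi1 = Psi2.  Symmetrically Psi3 = Psi2, so the marginals rho1 and rho3
   coincide, contradicting rho1 <> rho3. *)
From Pilot Require Import Defs.
From HB Require Import structures.
From mathcomp Require Import all_boot all_order all_algebra.
Import Order.TTheory GRing.Theory Num.Theory.
Local Open Scope ring_scope.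

Lemma subseq_allpairs (S U V : eqType) (f : S -> U -> V) (s1 s2 : seq S) (t1 t2 : seq U) :
  subseq s1 s2 -> subseq t1 t2 ->
  subseq [seq f x y | x <- s1, y <- t1] [seq f x y | x <- s2, y <- t2].
Proof.
move=> + sub_t; elim: s2 s1 => [|x s2 IH] [|y s1] //=; rewrite ?sub0seq //.
case: eqP => [-> sub_s | _ sub_s].
  by apply: cat_subseq; [apply: map_subseq | apply: IH].
rewrite -[X in subseq X _]cat0s; apply: cat_subseq; first exact: sub0seq.
exact: (IH (y :: s1)).
Qed.

Lemma sum_allpairs_mul (R : pzRingType) m n k (s : seq 'M[R]_(m, n)) (t : seq 'M[R]_(n, k)) :
  \sum_(w <- [seq x *m y | x <- s, y <- t]) w = (\sum_(x <- s) x) *m (\sum_(y <- t) y).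
Proof.
elim: s => [|x s IH] /=; first by rewrite !big_nil mul0mx.
by rewrite big_cat /= IH big_cons mulmxDl big_map -mulmx_sumr.
Qed.

Lemma castmxZ (R : pzRingType) m n m' n' (e : (m = m') * (n = n')) (a : R) (x : 'M[R]_(m, n)) :
  castmx e (a *: x) = a *: castmx e x.
Proof. by case: e => e1 e2; subst m' n'; rewrite !castmx_id. Qed.

Section Refinement.
Context {R : realFieldType} {T : OPT R}.
Hypothesis HO : OPT_axioms T.

Lemma transfP {X Y} (c : Mx T X Y) : c \in transf T X Y <-> exists cs, is_test cs /\ c \in cs.
Proof. by case: HO => _ [h _]. Qed.

Lemma test_seq {X Y Z} (cs : seq (Mx T X Y)) (ds : seq (Mx T Y Z)) :
  is_test cs -> is_test ds -> is_test [seq c *m d | c <- cs, d <- ds].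
Proof. by case: HO => _ [_ [_ [h _]]]; apply: h. Qed.

Lemma test_par {X Y Z W} (cs : seq (Mx T X Y)) (ds : seq (Mx T Z W)) :
  is_test cs -> is_test ds -> is_test [seq par c d | c <- cs, d <- ds].
Proof. by case: HO => _ [_ [_ [_ [h _]]]]; apply: h. Qed.

Lemma test_cond {X Y Z} (cs : seq (Mx T X Y)) (ds : nat -> seq (Mx T Y Z)) :
  is_test cs -> (forall i, (i < size cs)%N -> is_test (ds i)) ->
  is_test (flatten [seq [seq cs`_i *m d | d <- ds i] | i <- iota 0 (size cs)]).
Proof. by case: HO => _ [_ [_ [_ [_ [_ [h _]]]]]]; apply: h. Qed.

Lemma par_linl {X Y Z W} (a : R) (x y : Mx T X Y) (z : Mx T Z W) :
  par (a *: x + y) z = a *: par x z + par y z.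
Proof. by case: HO => _ [_ [_ [_ [_ [_ [_ [_ [_ [_ [_ [h _]]]]]]]]]]]; apply: h. Qed.

Lemma par_linr {X Y Z W} (a : R) (z : Mx T X Y) (x y : Mx T Z W) :
  par z (a *: x + y) = a *: par z x + par z y.
Proof. by case: HO => _ [_ [_ [_ [_ [_ [_ [_ [_ [_ [_ [_ [h _]]]]]]]]]]]]; apply: h. Qed.

Lemma par0l {X Y Z W} (z : Mx T Z W) : par (0 : Mx T X Y) z = 0.
Proof.
have := @par_linl X Y Z W 1 0 0 z; rewrite scaler0 addr0 scale1r => h.
by apply: (@addrI _ (par (0 : Mx T X Y) z)); rewrite addr0 -h.
Qed.

Lemma par0r {X Y Z W} (z : Mx T X Y) : par z (0 : Mx T Z W) = 0.
Proof.
have := @par_linr X Y Z W 1 z 0 0; rewrite scaler0 addr0 scale1r => h.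
by apply: (@addrI _ (par z (0 : Mx T Z W))); rewrite addr0 -h.
Qed.

Lemma parZl {X Y Z W} a (x : Mx T X Y) (z : Mx T Z W) : par (a *: x) z = a *: par x z.
Proof. by rewrite -[a *: x]addr0 par_linl par0l addr0. Qed.

Lemma parZr {X Y Z W} a (z : Mx T X Y) (x : Mx T Z W) : par z (a *: x) = a *: par z x.
Proof. by rewrite -[a *: x]addr0 par_linr par0r addr0. Qed.

Lemma parDl {X Y Z W} (x y : Mx T X Y) (z : Mx T Z W) : par (x + y) z = par x z + par y z.
Proof. by rewrite -[x]scale1r par_linl !scale1r. Qed.

Lemma parDr {X Y Z W} (z : Mx T X Y) (x y : Mx T Z W) : par z (x + y) = par z x + par z y.
Proof. by rewrite -[x]scale1r par_linr !scale1r. Qed.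

Lemma sum_allpairs_par {X Y Z W} (s : seq (Mx T X Y)) (t : seq (Mx T Z W)) :
  \sum_(w <- [seq par x y | x <- s, y <- t]) w = par (\sum_(x <- s) x) (\sum_(y <- t) y).
Proof.
elim: s => [|x s IH] /=; first by rewrite !big_nil par0l.
rewrite big_cat /= IH big_cons parDl; congr (_ + _); clear IH.
elim: t => [|y t IHt] /=; first by rewrite !big_nil par0r.
by rewrite !big_cons IHt parDr.
Qed.

Lemma refinesP {X Y} (D C : Mx T X Y) :
  refines D C <->
  exists ds sub : seq (Mx T X Y),
    [/\ is_test ds, subseq sub ds, C = \sum_(d <- sub) d & D \in sub].
Proof.
split=> [[ds [hds [m [-> hD]]]] | [ds [sub [hds /subseqP[m _ ->] -> hD]]]].
  by exists ds, (mask m ds); split=> //; apply: mask_subseq.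
by exists ds; split=> //; exists m.
Qed.

Lemma refines_comp {X Y Z} {D C : Mx T X Y} {c : Mx T Y Z} :
  c \in transf T Y Z -> refines D C -> refines (D *m c) (C *m c).
Proof.
move=> /transfP[cs [hcs c_cs]] /refinesP[ds [sub [hds hsub -> hD]]].
apply/refinesP; exists [seq x *m y | x <- ds, y <- cs].
exists [seq x *m y | x <- sub, y <- [:: c]]; split.
- exact: test_seq.
- by apply: subseq_allpairs; rewrite ?sub1seq.
- by rewrite sum_allpairs_mul big_seq1.
- by apply: allpairs_f; rewrite ?mem_seq1.
Qed.

Lemma refines_par {X Y Z W} {D C : Mx T X Y} {D' C' : Mx T Z W} :
  refines D C -> refines D' C' -> refines (par D D') (par C C').
Proof.
move=> /refinesP[ds [sub [hds hsub -> hD]]] /refinesP[ds' [sub' [hds' hsub' -> hD']]].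
apply/refinesP; exists [seq par x y | x <- ds, y <- ds'].
exists [seq par x y | x <- sub, y <- sub']; split.
- exact: test_par.
- exact: subseq_allpairs.
- by rewrite sum_allpairs_par.
- exact: allpairs_f.
Qed.

Lemma refines_cast {X Y Z} (e : X = Y) (D C : Mx T X Z) :
  refines D C ->
  refines (castmx (congr1 (Defs.dim T) e, erefl) D) (castmx (congr1 (Defs.dim T) e, erefl) C).
Proof. by case: Y / e; rewrite !castmx_id. Qed.

Lemma refines_tens {X Y} {D C : Mx T (sI T) X} {D' C' : Mx T (sI T) Y} :
  refines D C -> refines D' C' -> refines (tens_state D D') (tens_state C C').
Proof. by move=> hD hD'; apply: refines_cast; apply: refines_par. Qed.

End Refinement.

Section NoBroadcasting.
Context {R : realFieldType} {T : OPT R}.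
Hypothesis HT : Framework T.

Lemma deterministic_effect (X : sys T) : exists e : Mx T X (sI T), deterministic e.
Proof. by have [e [det_e _]] := HT.2.1 X; exists e. Qed.

Lemma tens_stateZ {X Y} (a b : R) (x : Mx T (sI T) X) (y : Mx T (sI T) Y) :
  tens_state (a *: x) (b *: y) = (a * b) *: tens_state x y.
Proof. by rewrite /tens_state (parZl HT.1) (parZr HT.1) scalerA castmxZ. Qed.

Lemma spowSZ {X} (w : R) (rho : Mx T (sI T) X) n :
  spowS (w *: rho) n = w ^+ n.+1 *: spowS rho n.
Proof. by elim: n => [|n IH] /=; rewrite ?expr1 // IH tens_stateZ -exprS. Qed.

Lemma refines_spowS {X} {D C : Mx T (sI T) X} n :
  refines D C -> refines (spowS D n) (spowS C n).
Proof. by move=> hDC; elim: n => [|n IH] //=; apply: (refines_tens HT.1). Qed.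

(* In a mixture p rho + (1-p) sigma of states, the weighted component p rho is a
   refinement: condition the coin test (p, 1-p) on tests containing rho, sigma. *)
Lemma refines_mixture {X} (rho sigma : Mx T (sI T) X) (p : R) :
  is_state rho -> is_state sigma -> 0 <= p <= 1 ->
  refines (p *: rho) (p *: rho + (1 - p) *: sigma).
Proof.
move=> /(transfP HT.1)[t1 [ht1 rho_t1]] /(transfP HT.1)[t2 [ht2 sigma_t2]] p01.
have coin : is_test [:: (p%:M : Mx T (sI T) (sI T)); (1 - p)%:M].
  exact: HT.2.2.2.2.2.1.2.
apply/refinesP.
exists ([seq (p%:M : Mx T (sI T) (sI T)) *m d | d <- t1] ++
        [seq ((1 - p)%:M : Mx T (sI T) (sI T)) *m d | d <- t2]).
exists [:: p *: rho; (1 - p) *: sigma]; split.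
- have := @test_cond _ _ HT.1 _ _ _ _ (fun i => if i == 0%N then t1 else t2) coin.
  by rewrite /= cats0; apply; case=> [|[|]].
- rewrite -cat1s; apply: cat_subseq; rewrite sub1seq -mul_scalar_mx; exact: map_f.
- by rewrite !big_cons big_nil addr0.
- exact: mem_head.
Qed.

(* A nonzero multiple of a normalized state refining a normalized pure state
   must be that very state: purity forces proportionality, and the
   deterministic effect fixes the constant. *)
Lemma pure_refinement_eq {X} {Psi Phi : Mx T (sI T) X} {w : R} :
  pure_state Psi -> normalized Psi -> normalized Phi -> w != 0 ->
  refines (w *: Phi) Psi -> Phi = Psi.
Proof.
move=> [_ atomPsi] [_ normPsi] [_ normPhi] w0 /atomPsi[l [_ hl]].
have [e det_e] := deterministic_effect X.
have : \tr ((w *: Phi) *m e) = \tr ((l *: Psi) *m e) by rewrite hl.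
rewrite -!scalemxAl !mxtraceZ normPhi // normPsi // !mulr1 => wl.
by apply: (scalerI w0); rewrite hl wl.
Qed.

Lemma marginal_unique {X Y} {Psi : Mx T (sI T) (scomp T X Y)} {rho rho' : Mx T (sI T) X} :
  marginal_is Psi rho -> marginal_is Psi rho' -> rho = rho'.
Proof. by have [e det_e] := deterministic_effect Y; move=> h h'; rewrite -(h e) // (h' e). Qed.

Lemma mixture_broadcast_collapse {X Y n} {rho sigma : Mx T (sI T) X} {p : R}
    {C : Mx T (tpow T X n.+1) Y} {Phi Psi : Mx T (sI T) Y} :
  is_state rho -> is_state sigma -> 0 < p <= 1 -> C \in transf T _ Y ->
  spowS rho n *m C = Phi -> spowS (p *: rho + (1 - p) *: sigma) n *m C = Psi ->
  normalized Phi -> normalized Psi -> pure_state Psi -> Phi = Psi.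
Proof.
move=> st_rho st_sigma /andP[p_gt0 p_le1] transfC <- <- normPhi normPsi purePsi.
have refine1 : refines (p *: rho) (p *: rho + (1 - p) *: sigma).
  by apply: refines_mixture; rewrite ?(ltW p_gt0).
have refineN := refines_comp HT.1 transfC (refines_spowS n refine1).
rewrite spowSZ -scalemxAl in refineN.
by apply: (pure_refinement_eq purePsi normPsi normPhi _ refineN); rewrite expf_neq0 ?gt_eqF.
Qed.

End NoBroadcasting.

Theorem mainTheorem20 (R : realFieldType) (T : OPT R) (HT : Framework T)
  (A B : sys T) (rho1 rho2 rho3 : Mx T (sI T) A)
  (Psi1 Psi2 Psi3 : Mx T (sI T) (scomp T A B)) (p : R) :
  normalized rho1 -> normalized rho2 -> normalized rho3 ->
  rho1 <> rho3 -> 0 < p < 1 -> rho2 = p *: rho1 + (1 - p) *: rho3 ->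
  purification rho1 Psi1 -> purification rho2 Psi2 -> purification rho3 Psi3 ->
  forall N : nat, (1 <= N)%N ->
  ~ (exists C : Mx T (tpow T A N) (scomp T A B),
       [/\ C \in transf T (tpow T A N) (scomp T A B),
           spow rho1 N *m C = Psi1,
           spow rho2 N *m C = Psi2 &
           spow rho3 N *m C = Psi3]).
Proof.
move=> [st1 _] _ [st3 _] rho13 /andP[p_gt0 p_lt1] rho2E
  [norm1 [_ marg1]] [norm2 [pure2 _]] [norm3 [_ marg3]].
case=> [//|n] _ [C [transfC out1 out2 out3]].
have p_range : 0 < p <= 1 by rewrite p_gt0 ltW.
have q_range : 0 < 1 - p <= 1 by rewrite subr_gt0 p_lt1 lerBlDr lerDl ltW.
have rho2E' : rho2 = (1 - p) *: rho3 + (1 - (1 - p)) *: rho1.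
  by rewrite opprB addrC subrKC rho2E addrC.
have Psi12 : Psi1 = Psi2.
  by apply: (mixture_broadcast_collapse HT st1 st3 p_range transfC out1 _ norm1 norm2 pure2);
    rewrite -rho2E.
have Psi32 : Psi3 = Psi2.
  by apply: (mixture_broadcast_collapse HT st3 st1 q_range transfC out3 _ norm3 norm2 pure2);
    rewrite -rho2E'.
apply: rho13; apply: (marginal_unique HT marg1).
by rewrite Psi12 -Psi32.
Qed.
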